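(* Fix $K$ and let $(\hat Z_K,\hat J_K)$ be a solution of $$\min_{Z\in\mathcal M_{n,K},\,J}\Big\{\sum_{k,l=1}^K\big\|A^{(k,l)}(Z,K)-\Pi_{(1)}\big(\Pi_{J^{(k,l)}}(A^{(k,l)}(Z,K))\big)\big\|_F^2+\mathrm{Pen}(n,J,K)\Big\},$$ where $J$ ranges over sparsity families for $(Z,K)$. Suppose that either $\mathrm{Pen}(n,J,K)$ is an increasing function of $|J|$ (non-separable penalty), or $\mathrm{Pen}$ is separable and increasing in each $|J_{k,l}|$, $k,l=1,\dots,K$. Then, writing $\hat J=\hat J_K$, $$\hat J_{k,l}(\hat Z_K,K)\subseteq\breve J_{k,l}(\hat Z_K,K)\subseteq(\breve J_* )_{k,l}(\hat Z_K,K)\quad\text{for all }k,l,$$ and $\hat J(\hat Z_K,K)\subseteq\breve J(\hat Z_K,K)\subseteq\breve J_*(\hat Z_K,K)$.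
   Context: $A\in\{0,1\}^{n\times n}$ symmetric, $A_{ij}\sim\mathrm{Bernoulli}((P_* )_{ij})$ independent for $i\le j$, $P_*$ symmetric. $\mathcal M_{n,K}$: clustering matrices $Z\in\{0,1\}^{n\times K}$ (one $1$ per row) assigning node $i$ to community $\mathcal N_k$ iff $Z_{ik}=1$, sizes $n_k$. For $B\in\mathbb R^{n\times n}$, $B^{(k,l)}(Z,K)\in\mathbb R^{n_k\times n_l}$ is the submatrix with rows indexed by $\mathcal N_k$ and columns by $\mathcal N_l$ (after reordering nodes by community). A sparsity family for $(Z,K)$ is $J=(J_{k,l})_{k,l=1}^K$ with $J_{k,l}\subseteq\mathcal N_k$; $J^{(k,l)}=J_{k,l}\times J_{l,k}$; $|J|=\sum_{k,l}|J_{k,l}|$; inclusions between families are meant componentwise. $\Pi_{J^{(k,l)}}(X)$ sets entries outside $J^{(k,l)}$ to zero and $\Pi_{(1)}(X)$ is the best rank-one approximation. A penalty is separable if $\mathrm{Pen}(n,J,K)=\sum_{k,l=1}^K\mathscr F(|J_{k,l}|,n_k)+\mathrm{Pen}^{(1)}(n,K)$ for some functions $\mathscr F,\mathrm{Pen}^{(1)}$; otherwise non-separable. $\breve J_{k,l}(Z,K)=\{i\in\mathcal N_k:A^{(k,l)}_{ij}(Z,K)\ne0\text{ for some }j\}$ and $(\breve J_* )_{k,l}(Z,K)=\{i\in\mathcal N_k:(P_* )^{(k,l)}_{ij}(Z,K)\ne0\text{ for some }j\}$; $\breve J$, $\breve J_*$ denote the corresponding families. *)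

From HB Require Import structures.
From mathcomp Require Import all_boot all_order all_algebra.
From mathcomp Require Import reals.
Set Implicit Arguments. Unset Strict Implicit. Unset Printing Implicit Defensive.
Import Order.TTheory GRing.Theory Num.Theory.
Local Open Scope ring_scope.

Section Defs.
Variable R : realType.

Definition is_clustering n K (Z : 'M[bool]_(n, K)) : Prop :=
  forall i : 'I_n, #|[set k | Z i k]| = 1%N.

Definition community n K (Z : 'M[bool]_(n, K)) (k : 'I_K) : {set 'I_n} :=
  [set i | Z i k].

Definition sparsity_family n K (Z : 'M[bool]_(n, K))
    (J : 'I_K -> 'I_K -> {set 'I_n}) : Prop :=
  forall k l, J k l \subset community Z k.

Definition famsize n K (J : 'I_K -> 'I_K -> {set 'I_n}) : nat :=
  (\sum_(k < K) \sum_(l < K) #|J k l|)%N.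

(* Submatrix with rows indexed by S and columns by T, nodes listed in
   increasing order (reordering by community). *)
Definition blk n (B : 'M[R]_n) (S T : {set 'I_n}) : 'M[R]_(#|S|, #|T|) :=
  \matrix_(i, j) B (enum_val i) (enum_val j).

Definition projJ n (S T SJ TJ : {set 'I_n}) (X : 'M[R]_(#|S|, #|T|)) :
    'M[R]_(#|S|, #|T|) :=
  \matrix_(i, j) (if (enum_val i \in SJ) && (enum_val j \in TJ)
                  then X i j else 0).

Definition frob2 p q (X : 'M[R]_(p, q)) : R :=
  \sum_(i < p) \sum_(j < q) X i j ^+ 2.

Definition is_best_rank1 p q (Y M : 'M[R]_(p, q)) : Prop :=
  (\rank M <= 1)%N /\
  forall M' : 'M[R]_(p, q), (\rank M' <= 1)%N -> frob2 (Y - M) <= frob2 (Y - M').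

(* The fit term sum_{k,l} || A^{(k,l)} - Pi_(1)(Pi_{J^{(k,l)}}(A^{(k,l)})) ||_F^2,
   for a given selection pi1 of the best rank-one approximation. *)
Definition fit (pi1 : forall p q, 'M[R]_(p, q) -> 'M[R]_(p, q))
    n K (A : 'M[R]_n) (Z : 'M[bool]_(n, K)) (J : 'I_K -> 'I_K -> {set 'I_n}) : R :=
  \sum_(k < K) \sum_(l < K)
    frob2 (blk A (community Z k) (community Z l)
           - pi1 _ _ (projJ (J k l) (J l k)
                       (blk A (community Z k) (community Z l)))).

(* breve J_{k,l}(Z,K) for a matrix B (B = A gives breve J, B = P_* gives breve J_* ) *)
Definition Jbrev n K (B : 'M[R]_n) (Z : 'M[bool]_(n, K)) (k l : 'I_K) : {set 'I_n} :=
  [set i in community Z k | [exists j in community Z l, B i j != 0]].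

(* Probability of the realization A under independent A_ij ~ Bernoulli(P_ij), i <= j. *)
Definition likelihood n (A P : 'M[R]_n) : R :=
  \prod_(i < n) \prod_(j < n | (i <= j)%N)
     (if A i j == 1 then P i j else 1 - P i j).

End Defs.

From HB Require Import structures.
From mathcomp Require Import all_boot all_order all_algebra.
From mathcomp Require Import reals.
Import Order.TTheory GRing.Theory Num.Theory.
Local Open Scope ring_scope.

(* Replacing the selected family J by its intersection with the rows of A that
   carry a nonzero entry leaves every projected block Pi_J(A^(k,l)), hence the
   fit, unchanged: the removed rows and columns are zero anyway (for the
   columns this uses the symmetry of A).  If J is not already contained in
   that support, the intersection is strictly smaller somewhere, so an
   increasing penalty strictly drops, contradicting minimality.  The second
   inclusion holds because an observed edge A_ij = 1 has probability
   (P_* )_ij, which must be nonzero for A to have positive likelihood. *)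

Lemma leq_ltn_sum {I : finType} {f g : I -> nat} (i0 : I) :
  (forall i, f i <= g i)%N -> (f i0 < g i0)%N -> (\sum_i f i < \sum_i g i)%N.
Proof.
move=> le_fg lt_fg0; rewrite (bigD1 i0) // [X in (_ < X)%N](bigD1 i0) //=.
by rewrite -addSn leq_add // leq_sum.
Qed.

Lemma ler_ltr_sum {R : numDomainType} {I : finType} {f g : I -> R} (i0 : I) :
  (forall i, f i <= g i) -> f i0 < g i0 -> \sum_i f i < \sum_i g i.
Proof.
move=> le_fg lt_fg0; rewrite (bigD1 i0) // [X in _ < X](bigD1 i0) //=.
by rewrite ltr_leD // ler_sum.
Qed.

Section FamilySize.
Context {n K : nat}.
Implicit Types (Z : 'M[bool]_(n, K)) (J : 'I_K -> 'I_K -> {set 'I_n}).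

Lemma sum_card_community {Z} : is_clustering Z -> (\sum_k #|community Z k| = n)%N.
Proof.
move=> hZ; rewrite -[RHS]card_ord -sum1_card.
under eq_bigr do rewrite /community -sum1dep_card.
rewrite (exchange_big_dep predT) //=; apply: eq_bigr => i _.
by rewrite sum1dep_card hZ.
Qed.

Lemma famsize_le {Z J} : is_clustering Z -> sparsity_family Z J ->
  (famsize J <= K * n)%N.
Proof.
move=> hZ hJ; rewrite -[X in (_ <= _ * X)%N](sum_card_community hZ) big_distrr /=.
apply: leq_sum => k _; rewrite -[K in (K * _)%N]card_ord -sum_nat_const.
by apply: leq_sum => l _; apply: subset_leq_card.
Qed.

Lemma famsize_lt {J J' k0 l0} : (forall k l, J' k l \subset J k l) ->
  J' k0 l0 \proper J k0 l0 -> (famsize J' < famsize J)%N.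
Proof.
move=> subJ /proper_card lt0; rewrite /famsize.
have le_card k l : (#|J' k l| <= #|J k l|)%N by apply/subset_leq_card.
apply: (leq_ltn_sum k0) => [k|]; first by apply: leq_sum.
exact: (leq_ltn_sum l0).
Qed.

Lemma separable_pen_lt {R : numDomainType} {F : nat -> nat -> R} {Z J J' k0 l0} :
  (forall a b m : nat, (a < b <= m)%N -> F a m < F b m) ->
  sparsity_family Z J -> (forall k l, J' k l \subset J k l) ->
  J' k0 l0 \proper J k0 l0 ->
  \sum_(k < K) \sum_(l < K) F #|J' k l| #|community Z k|
    < \sum_(k < K) \sum_(l < K) F #|J k l| #|community Z k|.
Proof.
move=> F_mono hJ subJ /proper_card lt0.
have le_card k l : (#|J k l| <= #|community Z k|)%N by apply/subset_leq_card.
have F_le k l : F #|J' k l| #|community Z k| <= F #|J k l| #|community Z k|.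
  have [eq_card|lt_card] := eqVneq #|J' k l| #|J k l|; first by rewrite eq_card.
  by apply/ltW/F_mono; rewrite le_card ltn_neqAle lt_card subset_leq_card.
apply: (ler_ltr_sum k0) => [k|]; first by apply: ler_sum => l _.
by apply: (ler_ltr_sum l0) => //; apply: F_mono; rewrite lt0 le_card.
Qed.

End FamilySize.

Section Support.
Context {R : realType} {n K : nat}.
Implicit Types (B C : 'M[R]_n) (Z : 'M[bool]_(n, K)).

Lemma mem_Jbrev {B Z k l i j} : i \in community Z k -> j \in community Z l ->
  B i j != 0 -> i \in Jbrev B Z k l.
Proof. by move=> ik jl nzB; rewrite inE ik; apply/existsP; exists j; rewrite jl. Qed.

Lemma Jbrev_subset {B C Z k l} : (forall i j, B i j != 0 -> C i j != 0) ->
  Jbrev B Z k l \subset Jbrev C Z k l.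
Proof.
move=> supp; apply/subsetP => i; rewrite !inE => /andP[-> /existsP[j /andP[jl nzB]]].
by apply/existsP; exists j; rewrite jl supp.
Qed.

Lemma projJ_setI_support {B} {S T SJ' TJ' : {set 'I_n}} (SJ TJ : {set 'I_n}) :
  (forall i j, i \in S -> j \in T -> B i j != 0 -> (i \in SJ') && (j \in TJ')) ->
  projJ (SJ :&: SJ') (TJ :&: TJ') (blk B S T) = projJ SJ TJ (blk B S T).
Proof.
move=> supp; apply/matrixP => i j; rewrite !mxE !inE.
have [->|nzB] := eqVneq (B (enum_val i) (enum_val j)) 0; first by rewrite !if_same.
by case/andP: (supp _ _ (enum_valP i) (enum_valP j) nzB) => -> ->; rewrite !andbT.
Qed.

Lemma fit_setI_Jbrev (pi1 : forall p q, 'M[R]_(p, q) -> 'M[R]_(p, q)) {A Z} J :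
  A^T = A -> fit pi1 A Z (fun k l => J k l :&: Jbrev A Z k l) = fit pi1 A Z J.
Proof.
move=> A_sym; apply: eq_bigr => k _; apply: eq_bigr => l _.
rewrite projJ_setI_support // => i j ik jl nzA.
rewrite (mem_Jbrev ik jl nzA) (mem_Jbrev jl ik) //.
by rewrite -A_sym mxE in nzA.
Qed.

Lemma likelihood_gt0_support {A P : 'M[R]_n} : A^T = A -> P^T = P ->
  (forall i j, A i j = 0 \/ A i j = 1) -> 0 < likelihood A P ->
  forall i j, A i j != 0 -> P i j != 0.
Proof.
move=> A_sym P_sym A01 lik_gt0 i j.
wlog le_ij : i j / (i <= j)%N.
  move=> hw; have [/hw//|/ltnW le_ji] := leqP i j.
  by rewrite -[A]A_sym -[P]P_sym !mxE; apply: hw.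
have A1 : A i j != 0 -> A i j = 1 by case: (A01 i j) => ->; rewrite ?eqxx.
move=> /A1 Aij1.
have /prodf_neq0/(_ i isT)/prodf_neq0/(_ j le_ij) := lt0r_neq0 lik_gt0.
by rewrite Aij1 eqxx.
Qed.

End Support.

Theorem lemma2 (R : realType) (n K : nat)
  (A Pstar : 'M[R]_n)
  (* P_* symmetric with entries in [0,1] *)
  (hPsym : Pstar^T = Pstar)
  (hP01 : forall i j, 0 <= Pstar i j <= 1)
  (* A symmetric, {0,1}-valued *)
  (hAsym : A^T = A)
  (hA01 : forall i j, A i j = 0 \/ A i j = 1)
  (* A is a realization of positive probability under the Bernoulli model *)
  (hApos : 0 < likelihood A Pstar)
  (* a selection of the best rank-one approximation Pi_(1) *)
  (pi1 : forall p q, 'M[R]_(p, q) -> 'M[R]_(p, q))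
  (hpi1 : forall p q (Y : 'M[R]_(p, q)), is_best_rank1 Y (pi1 p q Y))
  (* penalty Pen(n, J, K); n, K fixed; Z is passed since Pen may depend on n_k *)
  (Pen : 'M[bool]_(n, K) -> ('I_K -> 'I_K -> {set 'I_n}) -> R)
  (hPen :
     (exists g : nat -> R,
        (forall a b : nat, (a < b <= K * n)%N -> g a < g b) /\
        (forall Z J, Pen Z J = g (famsize J)))
     \/
     (exists (F : nat -> nat -> R) (Pen1 : R),
        (forall a b m : nat, (a < b <= m)%N -> F a m < F b m) /\
        (forall Z J, Pen Z J =
           \sum_(k < K) \sum_(l < K) F #|J k l| #|community Z k| + Pen1)))
  (Zh : 'M[bool]_(n, K)) (Jh : 'I_K -> 'I_K -> {set 'I_n})
  (hZh : is_clustering Zh) (hJh : sparsity_family Zh Jh)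
  (hmin : forall (Z : 'M[bool]_(n, K)) (J : 'I_K -> 'I_K -> {set 'I_n}),
     is_clustering Z -> sparsity_family Z J ->
     fit pi1 A Zh Jh + Pen Zh Jh <= fit pi1 A Z J + Pen Z J) :
  forall k l : 'I_K,
    Jh k l \subset Jbrev A Zh k l /\ Jbrev A Zh k l \subset Jbrev Pstar Zh k l.
Proof.
move=> k0 l0; split; last first.
  by apply: Jbrev_subset; apply: likelihood_gt0_support.
apply/negPn/negP => not_sub.
pose Jt k l := Jh k l :&: Jbrev A Zh k l.
have Jt_sub k l : Jt k l \subset Jh k l by apply: subsetIl.
have Jt_proper : Jt k0 l0 \proper Jh k0 l0.
  by rewrite properEneq Jt_sub andbT; apply: contra not_sub => /eqP/setIidPl.
have hJt : sparsity_family Zh Jt by move=> k l; apply: subset_trans (hJh k l).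
have := hmin Zh Jt hZh hJt; rewrite fit_setI_Jbrev // lerD2l; apply/negP.
rewrite -ltNge; case: hPen => [[g [g_mono Pen_g]] | [F [Pen1 [F_mono Pen_F]]]].
- rewrite !Pen_g; apply: g_mono.
  by rewrite (famsize_lt Jt_sub Jt_proper) (famsize_le hZh hJh).
- by rewrite !Pen_F ltrD2r; apply: separable_pen_lt F_mono hJh Jt_sub Jt_proper.
Qed.
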